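(* Let $f$ be a $C^1$ expanding map of $\mathbf{S}^1$ and $m\ge0$. Denote by $\operatorname{Leb}_N$ the uniform probability measure on $E_N$. Then, as $N\to+\infty$, the measures $((f_N)_* )^m(\operatorname{Leb}_N)$ converge in the weak-* topology to the probability measure on $\mathbf{S}^1$ with density $\mathcal L_f^m1$ with respect to Lebesgue measure, where $1$ is the constant function equal to $1$.
   Context: $\mathbf{S}^1=\mathbf{R}/\mathbf{Z}$; a $C^1$ expanding map is a $C^1$ map $f:\mathbf{S}^1\to\mathbf{S}^1$ with $f'(x)>1$ for every $x$ (for the map $\mathcal D^1$ convention, $f'\ge1$). $E_N=\{i/N:1\le i\le N\}$, $P_N$ sends $x$ to a closest point of $E_N$, $f_N=P_N\circ f|_{E_N}$, and $(f_N)_*$ denotes push-forward of measures by $f_N$. $\mathcal L_f\phi(y)=\sum_{x\in f^{-1}(y)}\phi(x)/f'(x)$ is the transfer operator. *)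

From HB Require Import structures.
From mathcomp Require Import all_boot all_order all_algebra.
From mathcomp Require Import all_classical all_reals all_analysis.
Set Implicit Arguments. Unset Strict Implicit. Unset Printing Implicit Defensive.
Import Order.TTheory GRing.Theory Num.Theory.
Import numFieldNormedType.Exports.
Local Open Scope classical_set_scope.
Local Open Scope ring_scope.

(* The circle S^1 = R/Z is modelled by R; functions on S^1 are 1-periodic
   functions R -> R; a map f : S^1 -> S^1 is given by a lift F : R -> R with
   F (x + 1) = F x + d for an integer d (the degree). *)

Definition is_lift (R : realType) (F : R -> R) : Prop :=
  exists d : int, forall x : R, F (x + 1) = F x + d%:~R.

Definition C1_expanding (R : realType) (F : R -> R) : Prop :=
  [/\ is_lift F,
      (forall x : R, derivable F x 1),
      continuous (derive1 F) &
      (forall x : R, 1 < derive1 F x)].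

Definition periodic1 (R : realType) (phi : R -> R) : Prop :=
  forall x : R, phi (x + 1) = phi x.

Definition cdist (R : realType) (x y : R) : R :=
  Num.min ((x - y) - (Num.floor (x - y))%:~R) ((Num.ceil (x - y))%:~R - (x - y)).

Definition preim (R : realType) (F : R -> R) (y : R) : set R :=
  [set x | 0 <= x < 1 /\ exists k : int, F x = y + k%:~R].

Definition transfer (R : realType) (F : R -> R) (phi : R -> R) (y : R) : R :=
  \sum_(x \in preim F y) phi x / derive1 F x.

(* P is a closest-point projection onto E_N: P N x is an index j < N such that
   j/N (the point j/N of E_N, with 0/N identified with N/N) is a closest point
   of E_N to x on the circle. *)
Definition closest_proj (R : realType) (P : nat -> R -> nat) : Prop :=
  forall (N : nat) (x : R), (0 < N)%N ->
    (P N x < N)%N /\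
    forall j : nat, (j < N)%N ->
      cdist x ((P N x)%:R / N%:R) <= cdist x (j%:R / N%:R).

Definition discr (R : realType) (F : R -> R) (P : nat -> R -> nat) (N : nat)
  (i : nat) : nat := P N (F (i%:R / N%:R)).

(* Induction on m, for all continuous 1-periodic test functions phi at once.
   For m = 0 the averages are Riemann sums of phi.  Since f_N = P_N o f and P_N
   moves points by less than 1/N, uniform continuity makes the average of phi
   along m+1 steps of f_N asymptotic to the average of phi o f along m steps,
   which by induction tends to the integral of (phi o f) L^m 1.  The duality
   int phi (L g) = int (phi o f) g, obtained by the substitution x = f^-1(y + j)
   on each of the d inverse branches of a lift of degree d, identifies this
   limit with the integral of phi L^(m+1) 1. *)

From Pilot Require Import Defs.
From HB Require Import structures.
From mathcomp Require Import all_boot all_order all_algebra.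
From mathcomp Require Import all_classical all_reals all_analysis.
From mathcomp Require Import ring lra zify.
Set Implicit Arguments. Unset Strict Implicit. Unset Printing Implicit Defensive.
Import Order.TTheory GRing.Theory Num.Theory.
Import numFieldNormedType.Exports.
Local Open Scope classical_set_scope.
Local Open Scope ring_scope.

Section Circle.
Variable R : realType.
Implicit Types x y z : R.

Lemma cdist_le_norm x y (k : int) : cdist x y <= `|x - y - k%:~R|.
Proof.
rewrite /cdist; set z := x - y.
have [kz|zk] := leP k%:~R z.
  rewrite ger0_norm ?subr_ge0 // ge_min; apply/orP; left.
  have : k <= Num.floor z by rewrite floor_ge_int.
  by rewrite -(ler_int R) => H; lra.
rewrite ltr0_norm ?subr_lt0 // ge_min; apply/orP; right.
have : Num.ceil z <= k by rewrite ceil_le_int ltW.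
by rewrite -(ler_int R) => H; lra.
Qed.

Lemma cdist_attained x y : exists k : int, `|x - y - k%:~R| <= cdist x y.
Proof.
rewrite /cdist; set z := x - y.
have [H|H] := leP (z - (Num.floor z)%:~R) ((Num.ceil z)%:~R - z).
  by exists (Num.floor z); rewrite ger0_norm // subr_ge0 floor_le.
by exists (Num.ceil z); rewrite ler0_norm ?opprB // ?subr_le0 ?ceil_ge.
Qed.

Definition frac z : R := z - (Num.floor z)%:~R.

Lemma frac_ge0 z : 0 <= frac z.
Proof. by rewrite /frac subr_ge0 floor_le. Qed.

Lemma frac_lt1 z : frac z < 1.
Proof. by have := floorD1_gt z; rewrite /frac intrD => h; lra. Qed.

Lemma fracE z : frac z = z + (- Num.floor z)%:~R.
Proof. by rewrite /frac mulrNz. Qed.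

Lemma periodic1_addn (phi : R -> R) : periodic1 phi ->
  forall x (n : nat), phi (x + n%:R) = phi x.
Proof.
move=> hp x; elim=> [|n IH]; first by rewrite addr0.
by rewrite -natr1 addrA hp.
Qed.

Lemma periodic1_addz (phi : R -> R) : periodic1 phi ->
  forall x (k : int), phi (x + k%:~R) = phi x.
Proof.
move=> hp x [n|n] /=; first exact: periodic1_addn.
by rewrite NegzE mulrNz -[in RHS](subrK n.+1%:R x) periodic1_addn.
Qed.

Lemma lift_addz (g : R -> R) (c : R) : (forall x, g (x + 1) = g x + c) ->
  forall x (k : int), g (x + k%:~R) = g x + k%:~R * c.
Proof.
move=> hg x k.
have gper : periodic1 (fun x => g x - x * c) by move=> t; rewrite hg; ring.
have := periodic1_addz gper x k => H.
by rewrite -[g (x + _)](subrK ((x + k%:~R) * c)) H; ring.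
Qed.

Lemma compact_unif_continuous (psi : R -> R) (K : set R) :
  compact K -> continuous psi ->
  forall e, 0 < e -> exists2 dl, 0 < dl &
    forall x y, K x -> `|x - y| < dl -> `|psi x - psi y| < e.
Proof.
move=> cK cpsi e e0.
pose close dl x := forall y, `|x - y| < dl -> `|psi x - psi y| < e.
have Kclose : \forall dl \near (0:R)^'+, K `<=` close dl.
  apply: (compact_near_coveringP K).1 => // x _.
  have e20 : 0 < e / 2 by rewrite divr_gt0.
  have /cvgr_dist_lt/(_ _ e20) := cpsi x.
  rewrite /= nearE => -[r /= r0 Hr].
  have r20 : 0 < r / 2 by rewrite divr_gt0.
  exists (ball x (r / 2), [set d : R | d < r / 2]) => /=.
    split; first exact: nbhsx_ballx.
    exists (r / 2) => // d /=; rewrite sub0r normrN => hd _.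
    exact: le_lt_trans (ler_norm d) hd.
  move=> [x' d] /= [xx' hd] y x'y; move: xx'; rewrite /ball /= => xx'.
  have h1 : `|psi x - psi x'| < e / 2.
    by apply: Hr; apply: lt_trans xx' _; rewrite ltr_pdivrMr // ltr_pMr // ltr1n.
  have h2 : `|psi x - psi y| < e / 2.
    by apply: Hr; rewrite /ball_ /=; have := ler_distD x' x y; lra.
  by have := ler_distD (psi x) (psi x') (psi y); rewrite (distrC (psi x') (psi x)); lra.
near (0:R)^'+ => dl.
exists dl; first by near: dl; exact: nbhs_right_gt.
have Kdl : K `<=` close dl by near: dl.
by move=> x y /Kdl; apply.
Unshelve. all: by end_near.
Qed.

Lemma periodic1_unif_continuous (psi : R -> R) : continuous psi -> periodic1 psi ->
  forall e, 0 < e -> exists2 dl, 0 < dl &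
    forall x y, `|x - y| < dl -> `|psi x - psi y| < e.
Proof.
move=> cpsi ppsi e e0.
have [dl dl0 hdl] := compact_unif_continuous (@segment_compact _ 0 1) cpsi e0.
exists dl => // x y xy; set k := - Num.floor x.
rewrite -(periodic1_addz ppsi x k) -(periodic1_addz ppsi y k).
apply: hdl; last by rewrite opprD addrACA subrr addr0.
by rewrite /= in_itv /= -fracE frac_ge0 ltW ?frac_lt1.
Qed.

Lemma preim_add1 (F : R -> R) y : Defs.preim F (y + 1) = Defs.preim F y.
Proof.
rewrite eqEsubset; split => x [x01 [k Fx]]; split => //.
  by exists (k + 1); rewrite Fx intrD; ring.
by exists (k - 1); rewrite Fx intrD mulrNz; ring.
Qed.

Lemma transfer_periodic (F g : R -> R) : periodic1 (transfer F g).
Proof. by move=> y; rewrite /transfer preim_add1. Qed.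

End Circle.

Section Integration.
Variable R : realType.
Local Notation mu := (@lebesgue_measure R).

Lemma is_derive1_continuous (V : R -> R) x d :
  is_derive x (1:R) V d -> {for x, continuous V}.
Proof. by case=> /derivable1_diffP /differentiable_continuous. Qed.

Lemma is_derive_shift (V : R -> R) (c x d : R) : is_derive (x + c) (1:R) V d ->
  is_derive x (1:R) (fun y => V (y + c)) d.
Proof.
move=> hV; have hc : is_derive x (1:R) (fun y : R => y + c) (1 + 0) by exact: is_deriveD.
by have := is_derive1_comp (f := V) (g := fun y => y + c) hV hc; rewrite addr0 mulr1.
Qed.

Lemma is_derive0_cst_gt (W : R -> R) (a : R) :
  (forall x, a < x -> is_derive x (1:R) W 0) ->
  forall p q, a < p -> a < q -> W p = W q.
Proof.
move=> dW p q; wlog pq : p q / p <= q.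
  by move=> H; case: (leP p q) => [|/ltW] pq ap aq; [exact: H | exact/esym/H].
move=> ap aq.
have dW' x : x \in `]p, q[ -> is_derive x (1:R) W 0.
  by rewrite in_itv /= => /andP[px _]; apply: dW; lra.
have cW : {within `[p, q], continuous W}.
  apply: continuous_in_subspaceT => x; rewrite inE /= in_itv /= => /andP[px _].
  by apply: is_derive1_continuous; apply: dW; lra.
have [c _] := MVT_segment pq dW' cW.
by rewrite mul0r => /eqP; rewrite subr_eq0 => /eqP.
Qed.

Lemma is_derive_parameterized_integral (k : R -> R) (a x : R) :
  continuous k -> a < x ->
  is_derive x (1:R) (fun y => parameterized_integral mu a y k) (k x).
Proof.
move=> ck ax.
have ik : mu.-integrable `[a, x + 1] (EFin \o k).
  apply: continuous_compact_integrable; first exact: segment_compact.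
  exact: continuous_subspaceT.
have xx1 : x < x + 1 by rewrite ltrDl.
have [dk k'x] := continuous_FTC1_closed xx1 ik ax (@ck x).
by apply: DeriveDef => //; rewrite -derive1E.
Qed.

Lemma integral_itv_is_derive (k V : R -> R) (a b : R) : a < b -> continuous k ->
  (forall x, a <= x <= b -> is_derive x (1:R) V (k x)) ->
  (\int[mu]_(x in `[a, b]) (k x)%:E = (V b - V a)%:E)%E.
Proof.
move=> ab ck dV.
have cV x : a <= x <= b -> {for x, continuous V}.
  by move=> /dV; exact: is_derive1_continuous.
apply: continuous_FTC2 => //.
- exact: continuous_subspaceT.
- split.
  + move=> x; rewrite in_itv /= => /andP[ax xb].
    by have [] // := dV x; rewrite (ltW ax) (ltW xb).
  + by apply: cvg_at_right_filter; apply: cV; rewrite lexx ltW.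
  + by apply: cvg_at_left_filter; apply: cV; rewrite lexx ltW.
- move=> x; rewrite in_itv /= => /andP[ax xb].
  by rewrite derive1E; apply: derive_val; apply: dV; rewrite (ltW ax) (ltW xb).
Qed.

Lemma integral_itv_periodic_shift (k : R -> R) (p a b : R) :
  continuous k -> 0 < p -> (forall z, k (z + p) = k z) ->
  (\int[mu]_(x in `[a, (a + p)%R]) (k x)%:E = \int[mu]_(x in `[b, (b + p)%R]) (k x)%:E)%E.
Proof.
move=> ck p0 kp.
pose c := Num.min a b - 1.
have [ca cb] : c < a /\ c < b.
  have ma : Num.min a b <= a by rewrite ge_min lexx.
  have mb : Num.min a b <= b by rewrite ge_min lexx orbT.
  by rewrite /c; split; lra.
pose V x := parameterized_integral mu c x k.
have dV (x : R) : c < x -> is_derive x (1:R) V (k x).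
  exact: is_derive_parameterized_integral.
have intV y : c < y ->
    (\int[mu]_(x in `[y, (y + p)%R]) (k x)%:E = (V (y + p) - V y)%:E)%E.
  move=> cy; apply: integral_itv_is_derive => //; first by rewrite ltrDl.
  by move=> x /andP[yx _]; apply: dV; lra.
rewrite intV // intV //; congr EFin.
apply: (@is_derive0_cst_gt (fun y => V (y + p) - V y) c) => // x cx.
rewrite -(subrr (k x)); apply: is_deriveB; last exact: dV.
by rewrite -[k x]kp; apply: is_derive_shift; apply: dV; lra.
Qed.

Lemma near_inv_natr_lt (dl : R) : 0 < dl ->
  \forall N \near \oo, (0 < N)%N /\ N%:R^-1 < dl.
Proof.
move=> dl0; near=> N.
have N0 : (0 < N)%N by near: N; exact: nbhs_infty_gt.
split => //; rewrite -[dl]invrK ltf_pV2 ?posrE ?invr_gt0 ?ltr0n //.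
by near: N; exact: nbhs_infty_gtr.
Unshelve. all: by end_near.
Qed.

Lemma riemann_sum_cvg (psi : R -> R) : continuous psi ->
  exists l, (\int[mu]_(x in `[0%R, 1%R]) (psi x)%:E = l%:E)%E /\
    (fun N : nat => N%:R^-1 * \sum_(i < N) psi (i%:R / N%:R)) @ \oo --> l.
Proof.
move=> cpsi.
pose V x := parameterized_integral mu (-1) x psi.
have dV (x : R) : -1 < x -> is_derive x (1:R) V (psi x).
  exact: is_derive_parameterized_integral.
exists (V 1 - V 0); split.
  by apply: integral_itv_is_derive => // x /andP[x0 _]; apply: dV; lra.
apply/cvgrPdist_le => e e0.
have [dl dl0 hdl] := compact_unif_continuous (@segment_compact _ 0 1) cpsi e0.
have := near_inv_natr_lt dl0; apply: filterS => N [N0 hN].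
set h := (N%:R : R)^-1.
have hdl' : h < dl := hN.
have NR0 : (0:R) < N%:R by rewrite ltr0n.
have h0 : 0 < h by rewrite invr_gt0.
have tel : V 1 - V 0 = \sum_(i < N) (V (i.+1%:R / N%:R) - V (i%:R / N%:R)).
  rewrite -(big_mkord xpredT (fun i => V (i.+1%:R / N%:R) - V (i%:R / N%:R))).
  by rewrite (telescope_sumr (fun i => V (i%:R / N%:R))) // divff ?mul0r ?gt_eqF.
have term (i : 'I_N) :
    `|(V (i.+1%:R / N%:R) - V (i%:R / N%:R)) - h * psi (i%:R / N%:R)| <= e * h.
  set a := i%:R / N%:R; set b := i.+1%:R / N%:R.
  have a0 : 0 <= a by rewrite /a divr_ge0.
  have a1 : a <= 1 by rewrite /a ler_pdivrMr // mul1r ler_nat ltnW.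
  have bE : b = a + h by rewrite /b /a /h -natr1 mulrDl mul1r.
  have ab : a <= b by rewrite bE lerDl ltW.
  have dV' x : x \in `]a, b[ -> is_derive x (1:R) V (psi x).
    by rewrite in_itv /= => /andP[ax _]; apply: dV; lra.
  have cV : {within `[a, b], continuous V}.
    apply: continuous_in_subspaceT => x; rewrite inE /= in_itv /= => /andP[ax _].
    by apply: is_derive1_continuous; apply: dV; lra.
  have [c /[!in_itv] /= /andP[ac cb] ->] := MVT_segment ab dV' cV.
  have -> : b - a = h by rewrite bE; ring.
  have /ltW : `|psi a - psi c| < e.
    apply: hdl; first by rewrite /= in_itv /= a0 a1.
    by rewrite ler0_norm ?subr_le0 //; lra.
  by rewrite (mulrC h) -mulrBl normrM (gtr0_norm h0) distrC ler_pM2r.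
rewrite tel mulr_sumr -sumrB.
apply: le_trans (ler_norm_sum _ _ _) _.
apply: (@le_trans _ _ (\sum_(i < N) (e * h))); first exact: ler_sum.
by rewrite sumr_const card_ord -mulr_natr -mulrA mulVf ?mulr1 ?gt_eqF.
Qed.

End Integration.

Section Discretization.
Variable R : realType.
Variable P : nat -> R -> nat.
Hypothesis P_closest : closest_proj P.

Lemma cdist_proj_lt (N : nat) (z : R) : (0 < N)%N ->
  cdist z ((P N z)%:R / N%:R) < N%:R^-1.
Proof.
move=> N0; have [_ Pmin] := P_closest z N0.
have NR0 : (0:R) < N%:R by rewrite ltr0n.
(* The point of E_N with index floor(zN) mod N is within 1/N of z. *)
pose a := Num.floor (z * N%:R).
pose r := (a %% N%:Z)%Z; pose q := (a %/ N%:Z)%Z.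
have r0 : 0 <= r by rewrite modz_ge0 // eqz_nat -lt0n.
have rN : r < N%:Z by rewrite ltz_pmod // ltz_nat.
have rE : (`|r|%N%:R : R) = r%:~R by rewrite -[in RHS](gez0_abs r0).
have jN : (`|r|%N < N)%N by rewrite -ltz_nat gez0_abs.
apply: (le_lt_trans (Pmin _ jN)); apply: (le_lt_trans (cdist_le_norm _ _ q)).
have -> : z - `|r|%N%:R / N%:R - q%:~R = (z * N%:R - a%:~R) / N%:R.
  have aR : (a%:~R : R) = q%:~R * N%:R + r%:~R.
    by rewrite [in LHS](divz_eq a N%:Z) intrD intrM -pmulrn.
  by rewrite rE aR; field; exact: lt0r_neq0.
have := floor_itv (z * N%:R); rewrite -/a intrD => /andP[za1 za2].
rewrite ger0_norm; last by rewrite divr_ge0 // subr_ge0.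
by rewrite ltr_pdivrMr // mulVf ?lt0r_neq0 //; lra.
Qed.

Lemma near_proj_close (psi : R -> R) : continuous psi -> periodic1 psi ->
  forall e, 0 < e -> \forall N \near \oo, (0 < N)%N /\
    forall z, `|psi z - psi ((P N z)%:R / N%:R)| < e.
Proof.
move=> cpsi ppsi e e0; have [dl dl0 hdl] := periodic1_unif_continuous cpsi ppsi e0.
have := near_inv_natr_lt dl0; apply: filterS => N [N0 hN]; split => // z.
have [k hk] := cdist_attained z ((P N z)%:R / N%:R).
rewrite -(periodic1_addz ppsi z (- k)); apply: hdl.
rewrite mulrNz; apply: le_lt_trans (lt_trans (cdist_proj_lt z N0) hN).
by apply: le_trans hk; rewrite -addrA (addrC (- _)) addrA.
Qed.

Definition orbit_average (F : R -> R) (N : nat) (psi : R -> R) (m : nat) : R :=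
  N%:R^-1 * \sum_(i < N) psi ((iter m (discr F P N) i)%:R / N%:R).

Lemma orbit_averageS_near (F psi : R -> R) (m : nat) :
  continuous psi -> periodic1 psi -> forall e, 0 < e -> \forall N \near \oo,
    `|orbit_average F N (psi \o F) m - orbit_average F N psi m.+1| <= e.
Proof.
move=> cpsi ppsi e e0.
have := near_proj_close cpsi ppsi e0; apply: filterS => N [N0 close].
have NR0 : (0:R) < N%:R by rewrite ltr0n.
rewrite /orbit_average -mulrBr -sumrB normrM ger0_norm ?invr_ge0 ?ler0n //.
rewrite -(ler_pM2l NR0) mulrA mulfV ?gt_eqF // mul1r.
apply: le_trans (ler_norm_sum _ _ _) _.
apply: (@le_trans _ _ (\sum_(i < N) e)).
  by apply: ler_sum => i _; rewrite iterS /discr /=; exact/ltW/close.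
by rewrite sumr_const card_ord mulr_natl.
Qed.

End Discretization.

Section ExpandingLift.
Variable R : realType.
Variable F : R -> R.
Hypothesis F_derivable : forall x : R, derivable F x 1.
Hypothesis derive1F_gt1 : forall x : R, 1 < derive1 F x.
Local Notation F' := (derive1 F).
Local Notation mu := (@lebesgue_measure R).
Implicit Types x y z w : R.

Lemma F_continuous : continuous F.
Proof. by move=> x; apply/differentiable_continuous/derivable1_diffP. Qed.

Lemma is_derive_F x : is_derive x (1:R) F (F' x).
Proof. by rewrite derive1E; exact: derivableP. Qed.

Lemma F_sub_gt x y : x < y -> y - x < F y - F x.
Proof.
move=> xy.
have [c _ ->] := MVT xy (fun t _ => is_derive_F t) (continuous_subspaceT F_continuous).
by rewrite -{1}(mul1r (y - x)) ltr_pM2r ?subr_gt0.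
Qed.

Lemma F_sub_ge x y : x <= y -> y - x <= F y - F x.
Proof. by rewrite le_eqVlt => /orP[/eqP->|/F_sub_gt/ltW //]; rewrite !subrr. Qed.

Lemma F_inj : injective F.
Proof.
move=> x y Fxy; apply/eqP; case: (ltgtP x y) => // xy; have := F_sub_gt xy;
  by rewrite Fxy subrr subr_lt0 ltNge (ltW xy).
Qed.

Lemma F_surj z : exists x, F x = z.
Proof.
pose b := `|z - F 0|.
have b0 : 0 <= b := normr_ge0 _.
have hb : z <= F b.
  by have := F_sub_ge b0; have := ler_norm (z - F 0); rewrite -/b; lra.
have ha : F (- b) <= z.
  have := @F_sub_ge (- b) 0; rewrite oppr_le0 b0 => /(_ isT).
  by have := ler_norm (F 0 - z); rewrite distrC -/b; lra.
have hz : Num.min (F (- b)) (F b) <= z <= Num.max (F (- b)) (F b).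
  by rewrite ge_min le_max ha hb orbT.
have ab : - b <= b by lra.
have [c _ Fc] := IVT ab (continuous_subspaceT F_continuous) hz.
by exists c.
Qed.

Definition Finv z : R := proj1_sig (cid (F_surj z)).

Lemma FinvK : cancel Finv F.
Proof. by move=> z; rewrite /Finv; case: cid. Qed.

Lemma FK : cancel F Finv.
Proof. by move=> x; apply: F_inj; rewrite FinvK. Qed.

Lemma Finv_continuous : continuous Finv.
Proof.
move=> z; have FinvF : {near Finv z, cancel F Finv} by near=> t; exact: FK.
have Fcont : {near Finv z, continuous F} by near=> t; exact: F_continuous.
by have := near_can_continuous FinvF Fcont; rewrite FinvK => /nbhs_singleton.
Unshelve. all: by end_near.
Qed.

Lemma Finv_lt : {homo Finv : z w / z < w}.
Proof.
move=> z w zw; rewrite ltNge; apply/negP => wz.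
by have := F_sub_ge wz; rewrite !FinvK; lra.
Qed.

Lemma lift_degree_nat (d : int) : (forall x, F (x + 1) = F x + d%:~R) ->
  exists2 dn : nat, (0 < dn)%N & forall x, F (x + 1) = F x + dn%:R.
Proof.
move=> Flift; have := @F_sub_gt 0 1 ltr01.
rewrite -[F 1](congr1 F (add0r 1)) Flift addrAC subrr add0r subr0 ltr1z => d1.
case: d Flift d1 => [dn|//] Flift /ltW d0.
by exists dn => //; rewrite -ltz_nat.
Qed.

Section Degree.
Variable dn : nat.
Hypothesis dn_gt0 : (0 < dn)%N.
Hypothesis F_lift : forall x, F (x + 1) = F x + dn%:R.
Hypothesis derive1F_continuous : continuous F'.

Lemma F_addz x (k : int) : F (x + k%:~R) = F x + k%:~R * dn%:R.
Proof. exact: lift_addz. Qed.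

Lemma Finv_addz z (k : int) : Finv (z + k%:~R * dn%:R) = Finv z + k%:~R.
Proof. by apply: F_inj; rewrite F_addz !FinvK. Qed.

Lemma derive1F_periodic : periodic1 F'.
Proof.
move=> x; rewrite /derive1.
suff -> : (fun h : R => h^-1 *: (F (h + (x + 1)) - F (x + 1))) =
  (fun h => h^-1 *: (F (h + x) - F x)) by [].
by apply: funext => h; rewrite addrA !F_lift; congr (_ *: _); ring.
Qed.


Lemma frac_Finv_neq y (i j : nat) : (i < j)%N -> (j < dn)%N ->
  frac (Finv (y + i%:R)) <> frac (Finv (y + j%:R)).
Proof.
move=> ij jdn; rewrite /frac => E.
(* The two preimages differ by a positive integer, yet by less than 1. *)
have lt1 : Finv (y + i%:R) < Finv (y + j%:R) by apply: Finv_lt; rewrite ltrD2l ltr_nat.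
have lt2 : Finv (y + j%:R) < Finv (y + i%:R) + 1.
  rewrite -[1]/(1%:~R) -Finv_addz; apply: Finv_lt.
  by rewrite mul1r -addrA ltrD2l -natrD ltr_nat ltn_addl.
set n := Num.floor (Finv (y + j%:R)) - Num.floor (Finv (y + i%:R)).
have nE : Finv (y + j%:R) - Finv (y + i%:R) = n%:~R by rewrite /n intrD mulrNz; lra.
have n0 : (0:R) < n%:~R by lra.
have n1 : n%:~R < (1:R) by lra.
by rewrite ltr0z in n0; rewrite ltrz1 in n1; lia.
Qed.

Lemma frac_Finv_inj y : set_inj `I_dn (fun j : nat => frac (Finv (y + j%:R))).
Proof.
move=> i j; rewrite !inE /= => idn jdn E.
case: (ltngtP i j) => // ij; first by case: (frac_Finv_neq ij jdn E).
by case: (frac_Finv_neq ij idn (esym E)).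
Qed.

Lemma preimE y : Defs.preim F y = (fun j : nat => frac (Finv (y + j%:R))) @` `I_dn.
Proof.
rewrite eqEsubset; split => x; last first.
  move=> [j /= jdn <-]; split; first by rewrite frac_ge0 frac_lt1.
  exists (j%:Z - Num.floor (Finv (y + j%:R)) * dn%:Z).
  by rewrite fracE F_addz FinvK !intrD !mulrNz !intrM !pmulrn; ring.
move=> [/andP[x0 x1] [k Fx]].
pose r := (k %% dn%:Z)%Z; pose q := (k %/ dn%:Z)%Z.
have r0 : 0 <= r by rewrite modz_ge0 // eqz_nat -lt0n.
have rdn : r < dn%:Z by rewrite ltz_pmod // ltz_nat.
exists `|r|%N; first by rewrite /= -ltz_nat gez0_abs.
have rE : (`|r|%N%:R : R) = r%:~R by rewrite -[in RHS](gez0_abs r0).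
have xE : Finv (y + r%:~R) = x + (- q)%:~R.
  apply: F_inj; rewrite F_addz FinvK Fx (divz_eq k dn%:Z).
  by rewrite !intrD !mulrNz !intrM; ring.
rewrite /= rE xE fracE; suff -> : Num.floor (x + (- q)%:~R) = - q.
  by rewrite opprK mulrNz; ring.
by apply: floor_def; rewrite intrD; apply/andP; split; lra.
Qed.

Definition transfer_term (g : R -> R) z : R := g (Finv z) / F' (Finv z).

Lemma transferE g : periodic1 g ->
  forall y, transfer F g y = \sum_(j < dn) transfer_term g (y + j%:R).
Proof.
move=> pg y; rewrite /transfer preimE fsbig_image; last exact: frac_Finv_inj.
rewrite (@fsbig_ord _ _ _ dn (fun j : nat => transfer_term g (y + j%:R))).
apply: eq_fsbigr => j _.
by rewrite /transfer_term fracE periodic1_addz // (periodic1_addz derive1F_periodic).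
Qed.

Lemma transfer_term_continuous g : continuous g -> continuous (transfer_term g).
Proof.
move=> cg z.
have cgFinv := continuous_comp (@Finv_continuous z) (@cg (Finv z)).
have cF'Finv := continuous_comp (@Finv_continuous z) (@derive1F_continuous (Finv z)).
have F'Finv0 : (F' \o Finv) z != 0 by apply/lt0r_neq0/(lt_trans _ (derive1F_gt1 _)).
exact: (continuousM cgFinv (continuousV F'Finv0 cF'Finv)).
Qed.

Lemma mul_transfer_term_continuous (h g : R -> R) : continuous h -> continuous g ->
  continuous (fun z => h z * transfer_term g z).
Proof.
by move=> ch cg z; apply: continuousM; [exact: ch | exact: transfer_term_continuous].
Qed.

Lemma transfer_continuous g : continuous g -> periodic1 g -> continuous (transfer F g).
Proof.
move=> cg pg.
have -> : transfer F g = \sum_(j < dn) (fun y => transfer_term g (y + j%:R)).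
  by apply: funext => y; rewrite transferE // fct_sumE.
apply: (big_ind (fun f : R -> R => continuous f)) => [|f1 f2 c1 c2 y|j _ y].
- exact: cst_continuous.
- exact: cvgD (c1 y) (c2 y).
have shift : {for y, continuous (fun t : R => t + j%:R)}.
  by apply: cvgD; [exact: cvg_id | exact: cvg_cst].
exact: continuous_comp shift (@transfer_term_continuous g cg (y + j%:R)).
Qed.

Lemma iter_transfer_continuous m g : continuous g -> periodic1 g ->
  continuous (iter m (transfer F) g) /\ periodic1 (iter m (transfer F) g).
Proof.
move=> cg pg; elim: m => [//|m [cm pm]] /=.
by split; [exact: transfer_continuous | exact: transfer_periodic].
Qed.

Lemma integral_comp_F (h g : R -> R) : continuous h -> continuous g ->
  (\int[mu]_(x in `[0%R, 1%R]) (h (F x) * g x)%:E =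
   \int[mu]_(z in `[F 0, F 1]) (h z * transfer_term g z)%:E)%E.
Proof.
move=> ch cg; rewrite (@integration_by_substitution_increasing _ F _ 0 1 ler01).
- apply: eq_integral => x _; congr EFin; rewrite /transfer_term !fctE /= FK.
  by field; apply/lt0r_neq0/(lt_trans _ (derive1F_gt1 _)).
- by move=> x y _ _ xy; have := F_sub_gt xy; lra.
- by move=> x _; exact: derive1F_continuous.
- exact: (cvgP _ (cvg_at_right_filter (@derive1F_continuous 0))).
- exact: (cvgP _ (cvg_at_left_filter (@derive1F_continuous 1))).
- split; first by move=> x _; exact: F_derivable.
    exact: (cvg_at_right_filter (@F_continuous 0)).
  exact: (cvg_at_left_filter (@F_continuous 1)).
- exact/continuous_subspaceT/mul_transfer_term_continuous.
Qed.

Lemma integral_mul_transfer_period (h g : R -> R) :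
  continuous h -> periodic1 h -> continuous g -> periodic1 g ->
  (\int[mu]_(x in `[0%R, 1%R]) (h x * transfer F g x)%:E =
   \int[mu]_(z in `[0%R, dn%:R]) (h z * transfer_term g z)%:E)%E.
Proof.
move=> ch ph cg pg.
pose k z := h z * transfer_term g z.
have ck : continuous k by exact: mul_transfer_term_continuous.
pose V x := parameterized_integral mu (-1) x k.
have dV (x : R) : -1 < x -> is_derive x (1:R) V (k x).
  exact: is_derive_parameterized_integral.
pose U y := \sum_(j < dn) V (y + j%:R).
have -> : (\int[mu]_(z in `[0%R, dn%:R]) (k z)%:E = (V dn%:R - V 0)%:E)%E.
  apply: integral_itv_is_derive => //; first by rewrite ltr0n.
  by move=> x /andP[x0 _]; apply: dV; lra.
have -> : (\int[mu]_(x in `[0%R, 1%R]) (h x * transfer F g x)%:E = (U 1 - U 0)%:E)%E.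
  apply: integral_itv_is_derive => //.
    by move=> x; apply: continuousM; [exact: ch | exact: transfer_continuous].
  move=> x /andP[x0 _].
  have -> : U = \sum_(j < dn) (fun y => V (y + j%:R)) by rewrite fct_sumE.
  rewrite transferE // mulr_sumr; apply: is_derive_sum => j; apply: is_derive_shift.
  by rewrite -(periodic1_addn ph x j); apply: dV; have := ler0n R j; lra.
congr EFin; rewrite /U -sumrB.
rewrite -(big_mkord xpredT (fun j => V (1 + j%:R) - V (0 + j%:R))).
under eq_bigr do rewrite add0r (addrC 1) natr1.
by rewrite (telescope_sumr (fun j => V j%:R)).
Qed.

Lemma integral_mul_transfer (h g : R -> R) :
  continuous h -> periodic1 h -> continuous g -> periodic1 g ->
  (\int[mu]_(x in `[0%R, 1%R]) (h x * transfer F g x)%:E =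
   \int[mu]_(x in `[0%R, 1%R]) (h (F x) * g x)%:E)%E.
Proof.
move=> ch ph cg pg.
pose k z := h z * transfer_term g z.
have ck : continuous k by exact: mul_transfer_term_continuous.
have kper z : k (z + dn%:R) = k z.
  rewrite /k /transfer_term periodic1_addn // -[dn%:R]mul1r -[1]/(1%:~R).
  by rewrite Finv_addz pg derive1F_periodic.
have F1 : F 1 = F 0 + dn%:R by rewrite -F_lift add0r.
rewrite integral_mul_transfer_period // integral_comp_F // F1.
have dn0 : (0:R) < dn%:R by rewrite ltr0n.
by have := integral_itv_periodic_shift 0 (F 0) ck dn0 kper; rewrite add0r; exact.
Qed.

Variable P : nat -> R -> nat.
Hypothesis P_closest : closest_proj P.

Lemma orbit_average_cvg (m : nat) (psi : R -> R) : continuous psi -> periodic1 psi ->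
  exists l, (\int[mu]_(x in `[0%R, 1%R])
      (psi x * iter m (transfer F) (fun _ => 1) x)%:E = l%:E)%E /\
    (fun N => orbit_average P F N psi m) @ \oo --> l.
Proof.
elim: m psi => [|m IH] psi cpsi ppsi.
  have [l [psil cvl]] := riemann_sum_cvg cpsi.
  by exists l; split => //; rewrite -psil; apply: eq_integral => x _; rewrite mulr1.
have cpsiF : continuous (psi \o F).
  by move=> x; apply: continuous_comp; [exact: F_continuous | exact: cpsi].
have ppsiF : periodic1 (psi \o F) by move=> x; rewrite /= F_lift periodic1_addn.
have [l [psiFl cvl]] := IH _ cpsiF ppsiF.
exists l; split.
  have c1 : continuous (fun _ : R => 1 : R) by exact: cst_continuous.
  have [cLm pLm] := iter_transfer_continuous m c1 (fun=> erefl).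
  by rewrite iterS integral_mul_transfer //; exact: psiFl.
apply/cvgrPdist_le => e e0; have e20 : 0 < e / 2 by rewrite divr_gt0.
move/cvgrPdist_le: cvl => /(_ _ e20) cvl.
have step := orbit_averageS_near P_closest F m cpsi ppsi e20.
apply: filterS2 cvl step => N h1 h2.
by have := ler_distD (orbit_average P F N (psi \o F) m) l (orbit_average P F N psi m.+1); lra.
Qed.

End Degree.
End ExpandingLift.

Unset Implicit Arguments.

Theorem lemma6p5 (R : realType) (F : R -> R) (P : nat -> R -> nat) (m : nat) :
  C1_expanding F -> closest_proj P ->
  forall phi : R -> R, continuous phi -> periodic1 phi ->
  (fun N : nat =>
     ((N%:R)^-1 * \sum_(i < N) phi ((iter m (discr F P N) i)%:R / N%:R))%:E)
    @ \oo -->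
  (\int[lebesgue_measure]_(x in `[0%R, 1%R]) (phi x * iter m (transfer F) (fun _ => 1) x)%:E)%E.
Proof.
move=> [[d Fd] F_derivable derive1F_cont derive1F_gt1] P_closest phi cphi pphi.
have [dn dn0 F_lift] := lift_degree_nat F_derivable derive1F_gt1 Fd.
have [l [-> cvl]] :=
  orbit_average_cvg F_derivable derive1F_gt1 dn0 F_lift derive1F_cont P_closest m cphi pphi.
by apply: cvg_EFin; [near=> N | exact: cvl].
Unshelve. all: by end_near.
Qed.
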